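(* Let $k\ge1$ and $B>2$ be constants and let $(\alpha_L^*,\alpha_R^* )$ be the fixed point of $F$ (equivalently, the solution in $(1/2,1)^2$ of $\exp(B\sqrt k(1-2\alpha_R))=\frac{1-\alpha_L}{\alpha_L}$, $\exp(\frac{B}{\sqrt k}(1-2\alpha_L))=\frac{1-\alpha_R}{\alpha_R}$). Then $(1-\alpha_L^* )(1-\alpha_R^* )B^2<1$.
   Context: The map $F$: for $(\alpha_L,\alpha_R)\in[0,1]^2$, if $\sqrt{\alpha_L\alpha_R}\,B\le1$ set $(\theta_L,\theta_R)=(0,0)$; otherwise let $(\theta_L,\theta_R)$ be the unique solution with $\theta_L,\theta_R>0$ of $\exp(-B\sqrt k\,\alpha_R\theta_R)=1-\theta_L$ and $\exp(-\frac{B}{\sqrt k}\alpha_L\theta_L)=1-\theta_R$. Then $F(\alpha_L,\alpha_R)=\big(\tfrac12(1+\theta_L\alpha_L),\tfrac12(1+\theta_R\alpha_R)\big)$. *)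

From Stdlib Require Import Reals Lra.
Open Scope R_scope.

(* Graph of the map F (parameters k, B):  F_graph k B aL aR bL bR  means
   F(aL, aR) = (bL, bR).  If sqrt(aL aR) B <= 1 then theta = (0,0), so
   F(aL,aR) = (1/2, 1/2); otherwise theta = (tL,tR) is the (by the paper,
   unique) solution with tL, tR > 0 of
     exp(-B sqrt k aR tR) = 1 - tL,   exp(-(B/sqrt k) aL tL) = 1 - tR,
   and F(aL,aR) = ((1 + tL aL)/2, (1 + tR aR)/2). *)
Definition F_graph (k B aL aR bL bR : R) : Prop :=
  (sqrt (aL * aR) * B <= 1 /\ bL = 1/2 /\ bR = 1/2) \/
  (1 < sqrt (aL * aR) * B /\
   exists tL tR : R,
     0 < tL /\ 0 < tR /\
     exp (- (B * sqrt k * aR * tR)) = 1 - tL /\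
     exp (- (B / sqrt k * aL * tL)) = 1 - tR /\
     bL = (1 + tL * aL) / 2 /\ bR = (1 + tR * aR) / 2).

Definition is_fixed_point_F (k B aL aR : R) : Prop :=
  0 <= aL <= 1 /\ 0 <= aR <= 1 /\ F_graph k B aL aR aL aR.

(* At a fixed point each coordinate satisfies a = (1 + t a)/2, i.e. 1 - a = a (1 - t),
   so (1 - aL)(1 - aR) B^2 = u v (1 - tL)(1 - tR) with u = B sqrt k aR, v = B aL / sqrt k.
   From exp(-x) = 1 - t and exp x > 1 + x one gets x (1 - t) < t; applied to x = u tR and
   x = v tL and multiplied, this gives u v (1 - tL)(1 - tR) < 1. The branch theta = 0 is
   impossible at a fixed point, since there sqrt(aL aR) B = B/2 > 1. *)
From Stdlib Require Import Reals Lra Psatz.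
Open Scope R_scope.

Lemma exp_neg_eq_one_sub_bounds (x t : R) :
  0 < t -> exp (- x) = 1 - t -> 0 < x * (1 - t) < t.
Proof.
  intros Ht E.
  assert (Ht1 : 0 < 1 - t) by (rewrite <- E; apply exp_pos).
  assert (Hx : 0 < x).
  { assert (- x < 0) by (apply exp_lt_inv; rewrite exp_0; lra). lra. }
  assert (Hinv : exp x * (1 - t) = 1).
  { rewrite <- E, <- exp_plus, Rplus_opp_r. apply exp_0. }
  assert (Hlin : 1 + x < exp x) by (apply exp_ineq1; lra).
  split; nra.
Qed.

Lemma exp_coupled_bound (u v s t : R) :
  0 < s -> 0 < t -> exp (- (u * t)) = 1 - s -> exp (- (v * s)) = 1 - t ->
  u * v * (1 - s) * (1 - t) < 1.
Proof.
  intros Hs Ht Es Et.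
  destruct (exp_neg_eq_one_sub_bounds _ _ Hs Es) as [Hu0 Hu].
  destruct (exp_neg_eq_one_sub_bounds _ _ Ht Et) as [Hv0 Hv].
  assert (Hprod : u * t * (1 - s) * (v * s * (1 - t)) < s * t) by nra.
  apply (Rmult_lt_reg_r (s * t)); nra.
Qed.

Theorem mainTheorem15 (k B aL aR : R) :
  1 <= k -> 2 < B -> is_fixed_point_F k B aL aR ->
  (1 - aL) * (1 - aR) * B ^ 2 < 1.
Proof.
  intros Hk HB [_ [_ [[Hs [-> ->]] | [_ [tL [tR [HtL [HtR [EL [ER [HaL HaR]]]]]]]]]]].
  - rewrite sqrt_square in Hs; lra.
  - assert (Hsk : 0 < sqrt k) by (apply sqrt_lt_R0; lra).
    assert (Hbound := exp_coupled_bound (B * sqrt k * aR) (B / sqrt k * aL) tL tR HtL HtR EL ER).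
    replace ((1 - aL) * (1 - aR) * B ^ 2)
      with (B * sqrt k * aR * (B / sqrt k * aL) * (1 - tL) * (1 - tR)).
    + exact Hbound.
    + replace (1 - aL) with (aL * (1 - tL)) by lra.
      replace (1 - aR) with (aR * (1 - tR)) by lra.
      field; lra.
Qed.
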